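(* Every yes-instance of Unweighted Borda Manipulation under single-peaked elections has a solution in which every manipulator places the distinguished candidate $p$ in his/her highest position (i.e., $\pi(p)=|\mathcal{C}|+1$ for every manipulator's vote $\pi$).
   Context: Borda elections: candidates $\mathcal{C}\cup\{p\}$ ($p\notin\mathcal{C}$); each vote is a bijection $\pi:\mathcal{C}\cup\{p\}\to\{1,\dots,|\mathcal{C}|+1\}$, giving candidate $c$ score $\pi(c)-1$; total score is the sum over all votes; $p$ wins iff its total score is strictly higher than that of every other candidate. Given a bijection $\mathcal{L}:\mathcal{C}\cup\{p\}\to\{1,\dots,|\mathcal{C}|+1\}$, a vote $\pi$ is coincident with $\mathcal{L}$ if for any three distinct candidates $a,b,c$ with $\mathcal{L}(a)<\mathcal{L}(b)<\mathcal{L}(c)$ or $\mathcal{L}(c)<\mathcal{L}(b)<\mathcal{L}(a)$, $\pi(c)>\pi(b)$ implies $\pi(b)>\pi(a)$. An election is single-peaked if there exists such an $\mathcal{L}$ (a harmonious order) with which all votes are coincident. UBM under single-peaked elections: input is a single-peaked election with candidates $\mathcal{C}\cup\{p\}$ and votes $\Pi_{\mathcal{V}}$ in which $p$ is not the winner, a harmonious order $\mathcal{L}$, and a set $\mathcal{V}'$ of manipulators. A solution is a multiset of votes $\Pi_{\mathcal{V}'}$, one per manipulator, each coincident with $\mathcal{L}$, such that $p$ has strictly higher total score than every candidate of $\mathcal{C}$ with respect to $\Pi_{\mathcal{V}}\uplus\Pi_{\mathcal{V}'}$. *)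

From mathcomp Require Import all_boot.
Set Implicit Arguments. Unset Strict Implicit. Unset Printing Implicit Defensive.

(* Candidates: a finite type T = C ∪ {p}, with the distinguished p : T.
   A vote is a bijection T -> {1..|T|}; we store it 0-based as a
   function T -> 'I_#|T| (value = pi(c) - 1 = score of c), required
   to be injective (hence bijective, domain and codomain have equal size). *)
Definition vote (T : finType) := {ffun T -> 'I_#|T|}.

Definition is_vote (T : finType) (v : vote T) : bool := injectiveb v.

Definition vscore (T : finType) (v : vote T) (c : T) : nat := nat_of_ord (v c).

Definition total_score (T : finType) (votes : seq (vote T)) (c : T) : nat :=
  \sum_(v <- votes) vscore v c.

Definition coincident (T : finType) (L v : vote T) : Prop :=
  forall a b c : T, a != b -> b != c -> a != c ->
    ((L a < L b < L c)%N || (L c < L b < L a)%N) ->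
    (v c > v b)%N -> (v b > v a)%N.

Definition winner (T : finType) (votes : seq (vote T)) (p : T) : Prop :=
  forall c : T, c != p -> (total_score votes c < total_score votes p)%N.

Definition ubm_solution (T : finType) (p : T) (L : vote T)
    (votesV : seq (vote T)) (k : nat) (sol : seq (vote T)) : Prop :=
  [/\ size sol = k,
      forall v, v \in sol -> is_vote v /\ coincident L v
    & winner (votesV ++ sol) p].

From mathcomp Require Import all_boot.
From mathcomp Require Import zify.
Set Implicit Arguments. Unset Strict Implicit.

(* Let a manipulator's vote [v] be coincident with the axis [L].  By
   single-peakedness, the candidates that [v] ranks at least as high as [p]
   form an [L]-interval having [p] as an endpoint: all of them lie on the
   same side of [p], and every candidate between [p] and one of them also
   ranks above [p].  Re-rank that interval by [L]-distance from [p], putting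
   [p] on top and leaving the candidates below [p] untouched.  The result is
   again a vote coincident with [L], [p] gains exactly [|T| - 1 - v p]
   points, and no other candidate gains more, so [p] keeps winning. *)

Definition axis_dist (T : finType) (L : vote T) (a b : T) : nat :=
  (L b - L a) + (L a - L b).

Definition promoted_score (T : finType) (L v : vote T) (p c : T) : nat :=
  if (v c < v p)%N then nat_of_ord (v c) else #|T|.-1 - axis_dist L p c.

(* The fallback [v c] of [insubd] is never used: [promoted_score] is always
   below [#|T|]. *)
Definition promote (T : finType) (L : vote T) (p : T) (v : vote T) : vote T :=
  [ffun c => insubd (v c) (promoted_score L v p c)].

Lemma promoteE (T : finType) (L v : vote T) (p c : T) :
  vscore (promote L p v) c = promoted_score L v p c.
Proof.
rewrite /vscore /promote ffunE val_insubd.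
suff -> : (promoted_score L v p c < #|T|)%N by [].
rewrite /promoted_score; case: ifP => _; first exact: ltn_ord.
by have := ltn_ord (v c); lia.
Qed.

Lemma promote_top (T : finType) (L v : vote T) (p : T) :
  (vscore (promote L p v) p).+1 = #|T|.
Proof.
rewrite promoteE /promoted_score ltnn /axis_dist.
by have := ltn_ord (v p); lia.
Qed.

Lemma promote_score_gain (T : finType) (L v : vote T) (p c : T) :
  (vscore (promote L p v) c + vscore v p <=
   vscore v c + vscore (promote L p v) p)%N.
Proof.
rewrite !promoteE /promoted_score ltnn /vscore /axis_dist.
by have := ltn_ord (v p); have := ltn_ord (v c); case: ifP; lia.
Qed.

Lemma inj_ord_neq (T : finType) n (f : T -> 'I_n) (x y : T) :
  injective f -> x != y -> nat_of_ord (f x) <> f y.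
Proof. by move=> f_inj /eqP xy /val_inj /f_inj. Qed.

Section SinglePeaked.

Variables (T : finType) (L v : vote T) (p : T).
Hypothesis L_inj : injective L.
Hypothesis v_inj : injective v.
Hypothesis v_coinc : coincident L v.

Lemma coincident_between_ge c b :
  (v p <= v c)%N ->
  (minn (L p) (L c) <= L b <= maxn (L p) (L c))%N -> (v p <= v b)%N.
Proof.
move=> vpc Lb.
have [->|bp] := eqVneq b p; first by [].
have [->|bc] := eqVneq b c; first by [].
have [cp|cp] := eqVneq c p.
  by subst c; have := inj_ord_neq L_inj bp; lia.
have Lbp := inj_ord_neq L_inj bp; have Lbc := inj_ord_neq L_inj bc.
have vcp := inj_ord_neq v_inj cp.
rewrite leqNgt; apply/negP => vbp.
have := v_coinc (a:=p) (b:=b) (c:=c); rewrite eq_sym bp bc eq_sym cp.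
have -> : ((L p < L b < L c) || (L c < L b < L p))%N by lia.
have -> : (v b < v c)%N by lia.
by move=> /(_ isT isT isT isT isT); lia.
Qed.

Lemma coincident_one_side x y :
  (v p <= v x)%N -> (v p <= v y)%N -> ~~ (L x < L p < L y)%N.
Proof.
move=> vpx vpy; apply/negP => Lxpy.
have xp : x != p by apply/eqP => E; subst x; lia.
have yp : y != p by apply/eqP => E; subst y; lia.
have xy : x != y by apply/eqP => E; subst y; lia.
have vyp := inj_ord_neq v_inj yp.
have := v_coinc (a:=x) (b:=p) (c:=y); rewrite xp eq_sym yp xy Lxpy /=.
have -> : (v p < v y)%N by lia.
by move=> /(_ isT isT isT isT isT); rewrite ltnNge vpx.
Qed.

(* The [axis_dist L p c + 1] candidates [L]-between [p] and [c] all rank at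
   least as high as [p], and only [#|T| - v p] scores are available there. *)
Lemma axis_dist_bound c : (v p <= v c)%N -> (axis_dist L p c + v p < #|T|)%N.
Proof.
move=> vpc.
pose above := [seq b <- enum T | (v p <= v b)%N].
have above_uniq : uniq above by rewrite filter_uniq // enum_uniq.
have scores_fit : (size [seq nat_of_ord (v b) | b <- above] <=
                   size (iota (v p) (#|T| - v p)))%N.
  apply: uniq_leq_size.
    by rewrite map_inj_uniq // => x y /val_inj /v_inj.
  move=> i /mapP [b]; rewrite mem_filter => /andP [vpb _] ->.
  by rewrite mem_iota; have := ltn_ord (v b); lia.
have between_above : (size (iota (minn (L p) (L c)) (axis_dist L p c).+1) <=
                      size [seq nat_of_ord (L b) | b <- above])%N.
  apply: uniq_leq_size; first exact: iota_uniq.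
  move=> i; rewrite mem_iota /axis_dist => Hi.
  have i_lt : (i < #|T|)%N by have := ltn_ord (L p); have := ltn_ord (L c); lia.
  have /codomP [b Lb] := inj_card_onto L_inj (eq_leq (card_ord _)) (Ordinal i_lt).
  apply/mapP; exists b; last by rewrite -Lb.
  rewrite mem_filter mem_enum andbT; apply: (coincident_between_ge vpc).
  have -> : nat_of_ord (L b) = i by rewrite -Lb.
  lia.
move: scores_fit between_above; rewrite !size_map !size_iota.
by have := ltn_ord (v p); lia.
Qed.

Lemma promote_is_vote : is_vote (promote L p v).
Proof.
apply/injectiveP => c1 c2 E.
have : promoted_score L v p c1 = promoted_score L v p c2.
  by rewrite -!promoteE /vscore E.
rewrite /promoted_score.
have := ltn_ord (v c1); have := ltn_ord (v c2).
case: ifP => h1; case: ifP => h2 v2 v1.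
- by move=> /val_inj /v_inj.
- by have := axis_dist_bound (c:=c2); lia.
- by have := axis_dist_bound (c:=c1); lia.
- have := axis_dist_bound (c:=c1); have := axis_dist_bound (c:=c2).
  have := coincident_one_side (x:=c1) (y:=c2).
  have := coincident_one_side (x:=c2) (y:=c1).
  rewrite /axis_dist => s21 s12 b2 b1 d.
  have : nat_of_ord (L c1) = L c2 by lia.
  by move=> /val_inj /L_inj.
Qed.

Lemma promote_coincident : coincident L (promote L p v).
Proof.
move=> a b c ab bc ac Lbet.
have := promoteE L v p a; have := promoteE L v p b; have := promoteE L v p c.
rewrite /vscore /promoted_score => -> -> ->.
have := ltn_ord (v a); have := ltn_ord (v b); have := ltn_ord (v c).
case: ifP => hb va vb vc.
  have := v_coinc ab bc ac Lbet.
  by case: ifP => hc; case: ifP => ha; lia.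
have := axis_dist_bound (c:=b).
case: ifP => hc; first by case: ifP => ha; lia.
have := axis_dist_bound (c:=c).
case: ifP => ha; first by lia.
have := axis_dist_bound (c:=a).
have := coincident_one_side (x:=a) (y:=b); have := coincident_one_side (x:=b) (y:=a).
have := coincident_one_side (x:=a) (y:=c); have := coincident_one_side (x:=c) (y:=a).
have := coincident_one_side (x:=b) (y:=c); have := coincident_one_side (x:=c) (y:=b).
by rewrite /axis_dist; lia.
Qed.

End SinglePeaked.

Lemma total_score_promote (T : finType) (L : vote T) (p c : T)
    (sol : seq (vote T)) :
  (total_score [seq promote L p v | v <- sol] c + total_score sol p <=
   total_score sol c + total_score [seq promote L p v | v <- sol] p)%N.
Proof.
rewrite /total_score !big_map -!big_split /=.
by apply: leq_sum => v _; apply: promote_score_gain.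
Qed.

Lemma winner_promote (T : finType) (L : vote T) (p : T)
    (votesV sol : seq (vote T)) :
  winner (votesV ++ sol) p ->
  winner (votesV ++ [seq promote L p v | v <- sol]) p.
Proof.
move=> win c cp; have := win c cp; have := total_score_promote L p c sol.
by rewrite /total_score !big_cat /=; lia.
Qed.

Theorem mainTheorem6 (T : finType) (p : T) (L : vote T)
    (votesV : seq (vote T)) (k : nat) :
  is_vote L ->
  (forall v, v \in votesV -> is_vote v /\ coincident L v) ->
  ~ winner votesV p ->
  (exists sol, ubm_solution p L votesV k sol) ->
  exists sol, ubm_solution p L votesV k sol /\
    (forall v, v \in sol -> (vscore v p).+1 = #|T|).
Proof.
move=> /injectiveP L_inj _ _ [sol [size_sol sol_votes win]].
exists [seq promote L p v | v <- sol]; split; first split.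
- by rewrite size_map.
- move=> _ /mapP [v v_sol ->].
  have [/injectiveP v_inj v_coinc] := sol_votes v v_sol.
  split; [exact: promote_is_vote | exact: promote_coincident].
- exact: winner_promote.
- by move=> _ /mapP [v _ ->]; apply: promote_top.
Qed.
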